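(* Let $\Gamma$ be a lattice satisfying the standing assumptions below. Let $\rho=(f_1,\dots,f_m)$, $m\ge 2$, be a face path with volume sequence $\Lambda(\rho)=(\nu_1,\dots,\nu_{m-1})$, and suppose there is a volume $\nu_0\notin\Lambda(\rho)$ with $f_1,f_m\in\partial(\nu_0)$ (i.e. $\rho$ is a simple face cycle). Then $W^Z(\rho)=\prod_{i=1}^m Z_{f_i}$ commutes with every element of the stabilizer group of the 3D toric code on $\Gamma$, i.e. it is a stabilizer or a logical operator.
   Context: $\Gamma$ is a finite, connected three-dimensional cell complex (lattice) with vertices $C_0(\Gamma)$, edges $C_1(\Gamma)$ (partial edges, incident on only one vertex, are allowed at the boundary), faces $C_2(\Gamma)$ and volumes $C_3(\Gamma)$. For a face $f$, $\partial(f)$ is its set of boundary edges; for a volume $\nu$, $\partial(\nu)$ is its set of boundary faces; for an edge $e$, $\iota(e)$ is the set of faces containing $e$ in their boundary. Every face lies in the boundary of at most two volumes. Standing assumptions: (L1) $\Gamma$ has no boundaries in its interior; (L2) the boundary of every face of $\Gamma$ and of its dual $\Gamma^*$ is either a closed path or an open path beginning and ending with partial edges; the dual complex is connected. The 3D toric code on $\Gamma$ has one qubit per face and stabilizer group generated by $B_e=\prod_{f\in\iota(e)}Z_f$ ($e\in C_1(\Gamma)$) and $A_\nu=\prod_{f\in\partial(\nu)}X_f$ ($\nu\in C_3(\Gamma)$). A logical operator is a Pauli operator commuting with all stabilizers but not in the stabilizer group (up to phase). A face path is a sequence of faces $(f_1,\dots,f_m)$ with pairwise distinct volumes $\nu_1,\dots,\nu_{m-1}$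 such that $f_i,f_{i+1}\in\partial(\nu_i)$. *)

From mathcomp Require Import all_boot.
Set Implicit Arguments. Unset Strict Implicit. Unset Printing Implicit Defensive.

Record lattice := Lattice {
  vert : finType;
  edge : finType;
  face : finType;                 (* C_2 : one qubit per face *)
  vol  : finType;
  ends : edge -> {set vert};      (* endpoints of an edge (1 if partial) *)
  fbd  : face -> {set edge};
  vbd  : vol -> {set face}
}.

Definition iota (G : lattice) (e : edge G) : {set face G} :=
  [set f | e \in fbd f].

Definition lattice_axioms (G : lattice) : Prop :=
  (forall e : edge G, 0 < #|ends e| <= 2) /\
  (forall f : face G, #|[set nu : vol G | f \in vbd nu]| <= 2).

(* Pauli operators on the face qubits, up to phase: (X-support, Z-support). *)
Definition pauli (G : lattice) : Type := ({set face G} * {set face G})%type.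

Definition pmul (G : lattice) (P Q : pauli G) : pauli G :=
  ((P.1 :\: Q.1) :|: (Q.1 :\: P.1), (P.2 :\: Q.2) :|: (Q.2 :\: P.2)).

Definition pid (G : lattice) : pauli G := (set0, set0).

Definition Zop (G : lattice) (A : {set face G}) : pauli G := (set0, A).
Definition Xop (G : lattice) (A : {set face G}) : pauli G := (A, set0).

(* P and Q commute iff the symplectic form vanishes. *)
Definition pcommute (G : lattice) (P Q : pauli G) : bool :=
  ~~ odd (#|P.1 :&: Q.2| + #|P.2 :&: Q.1|).

Definition Bop (G : lattice) (e : edge G) : pauli G := Zop (iota e).
Definition Aop (G : lattice) (nu : vol G) : pauli G := Xop (vbd nu).

Inductive in_stab (G : lattice) : pauli G -> Prop :=
| stab_id : in_stab (pid G)
| stab_B e : in_stab (Bop e)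
| stab_A nu : in_stab (Aop nu)
| stab_mul P Q : in_stab P -> in_stab Q -> in_stab (pmul P Q).

Definition face_path (G : lattice) (fs : seq (face G)) (vs : seq (vol G))
  : Prop :=
  size vs = (size fs).-1 /\ uniq vs /\
  forall i (nu : vol G) (f0 : face G), i < size vs ->
    nth f0 fs i \in vbd (nth nu vs i) /\ nth f0 fs i.+1 \in vbd (nth nu vs i).

Definition WZ (G : lattice) (fs : seq (face G)) : pauli G :=
  foldr (fun f P => pmul (Zop [set f]) P) (pid G) fs.

From mathcomp Require Import all_boot.

Set Implicit Arguments.
Unset Strict Implicit.
Unset Printing Implicit Defensive.

(* W^Z(rho) is of Z type, so it commutes with every B_e; it commutes with A_nu
   iff the face sequence meets the boundary of nu an even number of times.
   Closing the path by nu_0 makes every face f_i lie in the boundary of two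
   distinct consecutive volumes of the cyclic sequence (nu_0, ..., nu_{m-1});
   as a face bounds at most two volumes, these are all the volumes it bounds.
   Hence the faces of rho in the boundary of nu are counted by the occurrences
   of nu in that cyclic sequence and in its rotation by one, i.e. twice. *)

Lemma odd_card_setI_symdiff (T : finType) (A X Y : {set T}) :
  odd #|A :&: ((X :\: Y) :|: (Y :\: X))| = odd #|A :&: X| (+) odd #|A :&: Y|.
Proof.
suff card_eq : #|A :&: ((X :\: Y) :|: (Y :\: X))| + (#|A :&: X :&: Y|).*2 =
               #|A :&: X| + #|A :&: Y|.
  by move/(congr1 odd): card_eq; rewrite !oddD odd_double addbF => ->.
rewrite -!sum1_card -addnn !(big_mkcond (fun i => i \in _)) -!big_split /=.
apply: eq_bigr => x _.
by rewrite !inE; case: (x \in A); case: (x \in X); case: (x \in Y).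
Qed.

Lemma pcommute_pmulr (G : lattice) (P Q R : pauli G) :
  pcommute P (pmul Q R) = (pcommute P Q == pcommute P R).
Proof. by rewrite /pcommute /= !oddD !odd_card_setI_symdiff; do 4!case: (odd _). Qed.

Lemma pcommute_stab (G : lattice) (P : pauli G) :
  (forall e, pcommute P (Bop e)) -> (forall nu, pcommute P (Aop nu)) ->
  forall S, in_stab S -> pcommute P S.
Proof.
move=> commB commA S; elim=> // [|Q R _ commQ _ commR].
  by rewrite /pcommute !setI0 cards0.
by rewrite pcommute_pmulr commQ commR.
Qed.

Lemma WZ_Xsupport (G : lattice) (fs : seq (face G)) : (WZ fs).1 = set0.
Proof. by elim: fs => [|f fs IH] //=; rewrite IH setD0 setU0. Qed.

Lemma odd_card_setI_WZ (G : lattice) (B : {set face G}) (fs : seq (face G)) :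
  odd #|B :&: (WZ fs).2| = odd (count (mem B) fs).
Proof.
elim: fs => [|f fs IH] /=; first by rewrite setI0 cards0.
rewrite odd_card_setI_symdiff IH oddD; congr (_ (+) _).
have [fB | fNB] := boolP (f \in B).
  by rewrite (setIidPr _) ?cards1 // sub1set.
by rewrite (_ : _ :&: _ = set0) ?cards0 //; apply/setP=> x; rewrite !inE;
  case: eqP => [->|]; rewrite ?andbF // (negbTE fNB).
Qed.

Lemma pcommute_WZ_Bop (G : lattice) (fs : seq (face G)) (e : edge G) :
  pcommute (WZ fs) (Bop e).
Proof. by rewrite /pcommute WZ_Xsupport !setI0 !set0I cards0. Qed.

Lemma pcommute_WZ_Aop (G : lattice) (fs : seq (face G)) (nu : vol G) :
  pcommute (WZ fs) (Aop nu) = ~~ odd (count (mem (vbd nu)) fs).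
Proof.
by rewrite /pcommute WZ_Xsupport set0I cards0 add0n setIC odd_card_setI_WZ.
Qed.

Lemma nth_rot1_neq (T : eqType) (x0 : T) (s : seq T) (i : nat) :
  uniq s -> 1 < size s -> i < size s -> nth x0 (rot 1 s) i != nth x0 s i.
Proof.
case: s => [|x s] s_uniq // s_gt1 i_lt; rewrite rot1_cons nth_rcons.
have neq_nth j k : j < size (x :: s) -> k < size (x :: s) -> j != k ->
    nth x0 (x :: s) j != nth x0 (x :: s) k.
  by move=> j_lt k_lt; rewrite nth_uniq.
have [i_lt_s | i_ge_s] := ltnP i (size s).
  by apply: (neq_nth i.+1 i) => //; rewrite neq_ltn ltnSn orbT.
have -> : i = size s by apply/eqP; rewrite eqn_leq i_ge_s -ltnS i_lt.
by rewrite eqxx (neq_nth 0 (size s)) // eq_sym -lt0n.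
Qed.

Lemma mem_vbd_two_vols (G : lattice) (f : face G) (c c' nu : vol G) :
  #|[set v | f \in vbd v]| <= 2 ->
  f \in vbd c -> f \in vbd c' -> c != c' ->
  (f \in vbd nu : nat) = (c == nu) + (c' == nu).
Proof.
move=> two_vols f_c f_c' c_neq.
have [<-|c_nu] := eqVneq c nu; first by rewrite f_c eq_sym (negbTE c_neq).
have [<-|c'_nu] := eqVneq c' nu; first by rewrite f_c'.
suff /negbTE-> : f \notin vbd nu by [].
apply: contraTN two_vols => f_nu.
have sub3 : nu |: [set c; c'] \subset [set v | f \in vbd v].
  by apply/subsetP=> v; rewrite !inE => /or3P[] /eqP->.
rewrite -ltnNge (leq_trans _ (subset_leq_card sub3)) //.
by rewrite cardsU1 cards2 c_neq !inE negb_or !(eq_sym nu) c_nu c'_nu.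
Qed.

Lemma count_vbd_two_vols (G : lattice) (nu : vol G)
    (fs : seq (face G)) (cs cs' : seq (vol G)) :
  (forall f : face G, #|[set v | f \in vbd v]| <= 2) ->
  size cs = size fs -> size cs' = size fs ->
  (forall i (f0 : face G) (nu0 : vol G), i < size fs ->
    [/\ nth f0 fs i \in vbd (nth nu0 cs i), nth f0 fs i \in vbd (nth nu0 cs' i)
      & nth nu0 cs i != nth nu0 cs' i]) ->
  count (mem (vbd nu)) fs = count_mem nu cs + count_mem nu cs'.
Proof.
move=> two_vols; elim: fs cs cs' => [|f fs IH] [|c cs] [|c' cs'] //= [sz] [sz'] inc.
have [f_c f_c' c_neq] := inc 0 f c isT.
rewrite (mem_vbd_two_vols nu (two_vols f) f_c f_c' c_neq).
by rewrite (IH cs cs' sz sz' (fun i => inc i.+1)) addnACA.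
Qed.

Definition face_cycle (G : lattice) (fs : seq (face G)) (cs : seq (vol G)) :=
  size cs = size fs /\
  forall i (f0 : face G) (nu : vol G), i < size fs ->
    nth f0 fs i \in vbd (nth nu cs i) /\ nth f0 fs i \in vbd (nth nu (rot 1 cs) i).

Lemma face_path_cycle (G : lattice) (fs : seq (face G)) (vs : seq (vol G))
    (nu0 : vol G) (f0 : face G) :
  0 < size fs -> face_path fs vs ->
  nth f0 fs 0 \in vbd nu0 -> nth f0 fs (size fs).-1 \in vbd nu0 ->
  face_cycle fs (nu0 :: vs).
Proof.
move=> fs_gt0 [sz [_ path]] first last.
have size_cs : size (nu0 :: vs) = size fs by rewrite /= sz prednK.
split=> // i g0 nu i_lt; rewrite (set_nth_default f0) // rot1_cons nth_rcons.
split.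
  case: i i_lt => [|j] j_lt; first by [].
  have j_lt' : j < size vs by rewrite -ltnS -/(size (nu0 :: vs)) size_cs.
  by rewrite /= (set_nth_default nu0) //; have [] := path j nu0 f0 j_lt'.
case: ltngtP => [i_lt' | i_gt | i_eq]; first by have [] := path i nu f0 i_lt'.
  by move: i_lt; rewrite -size_cs ltnNge /= i_gt.
by rewrite i_eq sz.
Qed.

Lemma face_cycle_count_even (G : lattice) (fs : seq (face G)) (cs : seq (vol G))
    (nu : vol G) :
  (forall f : face G, #|[set v | f \in vbd v]| <= 2) ->
  face_cycle fs cs -> uniq cs -> 1 < size cs ->
  ~~ odd (count (mem (vbd nu)) fs).
Proof.
move=> two_vols [sz inc] cs_uniq cs_gt1.
have rot_perm : perm_eq (rot 1 cs) cs by rewrite perm_rot.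
rewrite (count_vbd_two_vols nu two_vols sz (etrans (size_rot 1 cs) sz)).
  by rewrite (permP rot_perm) addnn odd_double.
move=> i f0 nu0 i_lt; have [f_cs f_rot] := inc i f0 nu0 i_lt.
by split=> //; rewrite eq_sym nth_rot1_neq // sz.
Qed.

Theorem lemma2 (G : lattice) (fs : seq (face G)) (vs : seq (vol G))
  (nu0 : vol G) (f0 : face G) :
  lattice_axioms G ->
  2 <= size fs ->
  face_path fs vs ->
  nu0 \notin vs ->
  nth f0 fs 0 \in vbd nu0 ->
  nth f0 fs (size fs).-1 \in vbd nu0 ->
  forall S : pauli G, in_stab S -> pcommute (WZ fs) S.
Proof.
move=> [_ two_vols] fs_gt1 path nu0_notin first last.
have cycle := face_path_cycle (ltnW fs_gt1) path first last.
have cs_uniq : uniq (nu0 :: vs) by rewrite /= nu0_notin; case: path => _ [].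
apply: pcommute_stab => [e | nu]; first exact: pcommute_WZ_Bop.
by rewrite pcommute_WZ_Aop (face_cycle_count_even _ two_vols cycle) // cycle.1.
Qed.
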